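(* Let $0\le\alpha\le1/L$ and $0\le\beta\le 2/L-\alpha$. Then for all $n\ge1$, $$f(\theta_n)-f(\theta_* )\le\min\Big\{\frac{\|\theta_0-\theta_*\|^2}{\alpha n^2},\ \frac{4\|\theta_0-\theta_*\|^2}{(\alpha+\beta)n}\Big\},$$ where a term with zero denominator is interpreted as $+\infty$.
   Context: Let $H\in\mathbb{R}^{d\times d}$ be symmetric positive definite with largest eigenvalue $L$, $q\in\mathbb{R}^d$, $f(\theta)=\frac12\langle\theta,H\theta\rangle-\langle q,\theta\rangle$, $\theta_*=H^{-1}q$. For parameters $\alpha,\beta\in\mathbb{R}$, given $\theta_0\in\mathbb{R}^d$, set $\theta_1=\theta_0$ and for $n\ge1$ $$\theta_{n+1}=\frac{2n}{n+1}\theta_n-\frac{n-1}{n+1}\theta_{n-1}-\frac{1}{n+1}\Big(n(\alpha+\beta)H(\theta_n-\theta_* )-(n-1)\beta H(\theta_{n-1}-\theta_* )\Big)$$ (equivalently $-\frac{n\alpha+\beta}{n+1}f'(\omega_n)$ with $\omega_n=\frac{n(\alpha+\beta)\theta_n-(n-1)\beta\theta_{n-1}}{n\alpha+\beta}$ when $n\alpha+\beta\ne0$). *)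

From HB Require Import structures.
From mathcomp Require Import all_boot all_order all_algebra.
Set Implicit Arguments. Unset Strict Implicit. Unset Printing Implicit Defensive.
Import Order.TTheory GRing.Theory Num.Theory.
Local Open Scope ring_scope.

Definition dotv (R : rcfType) (d : nat) (u v : 'cV[R]_d) : R := (u^T *m v) 0 0.

Definition quadf (R : rcfType) (d : nat) (H : 'M[R]_d) (q : 'cV[R]_d)
  (th : 'cV[R]_d) : R := 2^-1 * dotv th (H *m th) - dotv q th.

Definition thstar (R : rcfType) (d : nat) (H : 'M[R]_d) (q : 'cV[R]_d) : 'cV[R]_d :=
  invmx H *m q.

(* One step: given n >= 1, theta_n and theta_{n-1}, produce theta_{n+1}. *)
Definition av_step (R : rcfType) (d : nat) (H : 'M[R]_d) (q : 'cV[R]_d)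
  (alpha beta : R) (n : nat) (thn thn1 : 'cV[R]_d) : 'cV[R]_d :=
  let ts := thstar H q in
  let N := (n%:R : R) in
  let N1 := ((n.-1)%:R : R) in
  (2 * N / (N + 1)) *: thn - (N1 / (N + 1)) *: thn1
  - (N + 1)^-1 *: (N * (alpha + beta) *: (H *m (thn - ts))
                   - N1 * beta *: (H *m (thn1 - ts))).

(* av_pair n = (theta_{n+1}, theta_n), with theta_1 = theta_0. *)
Fixpoint av_pair (R : rcfType) (d : nat) (H : 'M[R]_d) (q : 'cV[R]_d)
  (alpha beta : R) (th0 : 'cV[R]_d) (n : nat) : 'cV[R]_d * 'cV[R]_d :=
  match n with
  | 0 => (th0, th0)
  | m.+1 => let p := av_pair H q alpha beta th0 m in
            (av_step H q alpha beta m.+1 p.1 p.2, p.1)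
  end.

Definition av_theta (R : rcfType) (d : nat) (H : 'M[R]_d) (q : 'cV[R]_d)
  (alpha beta : R) (th0 : 'cV[R]_d) (n : nat) : 'cV[R]_d :=
  (av_pair H q alpha beta th0 n).2.

Definition sym_posdef (R : rcfType) (d : nat) (H : 'M[R]_d) : Prop :=
  H^T = H /\ (forall v : 'cV[R]_d, v != 0 -> 0 < dotv v (H *m v)).

Definition largest_eigenvalue (R : rcfType) (d : nat) (H : 'M[R]_d) (L : R) : Prop :=
  eigenvalue H L /\ (forall a : R, eigenvalue H a -> a <= L).

From HB Require Import structures.
From mathcomp Require Import all_boot all_order all_algebra.
From mathcomp Require Import ring lra spectral sesquilinear.
From mathcomp.real_closed Require Import complex.
Import Order.TTheory GRing.Theory Num.Theory.
Local Open Scope ring_scope.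

(* Along an eigenvector of [H] with eigenvalue [h], the component of
   [theta_n - theta_*] is [x_(n-1) / n] times that of [theta_0 - theta_*], where
   [x_(m+1) = (2 - a - b) x_m - (1 - b) x_(m-1)], [x_0 = 1], [x_(-1) = 0],
   [a = alpha h] and [b = beta h]. As [f(theta) - f(theta_* )] is half the
   [H]-norm of [theta - theta_*], it suffices to bound [h x_(n-1)^2 / n^2] for
   every [h] in [[0, L]].  A quadratic energy that is nonincreasing along the
   recurrence gives [a x_m^2 <= 2], hence the [1 / (alpha n^2)] rate.  For the
   [1 / ((alpha + beta) n)] rate we show [(a + b) x_m^2 <= 3 (m + 1)], separately
   for [b >= 1] (where [x_m^2 + (b - 1) x_(m-1)^2] is nonincreasing), for
   [a <= 2 b <= 2] (where [x_m - (1 - b) x_(m-1)] stays in [[-1, 1]], so [x_m]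
   grows at most linearly), and for [a > 2 b] (which follows from the first
   bound). *)

Section RealInequalities.
Context {R : rcfType}.
Implicit Types s t u v : R.

Lemma mulr_le_of_le_div (c h L k : R) :
  0 < L -> 0 <= c -> h <= L -> c <= k / L -> c * h <= k.
Proof.
move=> L_gt0 c_ge0 h_le c_le; apply: le_trans (ler_wpM2l c_ge0 h_le) _.
by rewrite -ler_pdivlMr.
Qed.

Lemma sqr_convex_le s t u v : 0 <= s -> 0 <= t -> s + t <= 1 ->
  (s * u + t * v) ^+ 2 <= s * u ^+ 2 + t * v ^+ 2.
Proof.
move=> s_ge0 t_ge0 st_le1.
have Q_ge0 : 0 <= s * u ^+ 2 + t * v ^+ 2 by rewrite addr_ge0 // mulr_ge0 ?sqr_ge0.
have : (s * u + t * v) ^+ 2 <= (s + t) * (s * u ^+ 2 + t * v ^+ 2).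
  rewrite -subr_ge0.
  have -> : (s + t) * (s * u ^+ 2 + t * v ^+ 2) - (s * u + t * v) ^+ 2 =
            s * t * (u - v) ^+ 2 by ring.
  by rewrite mulr_ge0 ?sqr_ge0 ?mulr_ge0.
have : 0 <= (1 - (s + t)) * (s * u ^+ 2 + t * v ^+ 2) by rewrite mulr_ge0 // subr_ge0.
lra.
Qed.

End RealInequalities.


Section RescaledResidual.
Context {R : rcfType}.
Implicit Types a b u v : R.

(* [rescaled_residual a b m = (x_m, x_(m-1))] for the recurrence [x] above. *)
Fixpoint rescaled_residual a b (m : nat) : R * R :=
  match m with
  | 0 => (1, 0)
  | m'.+1 => let p := rescaled_residual a b m' in
             ((2 - a - b) * p.1 - (1 - b) * p.2, p.1)
  end.

Local Notation x a b m := (rescaled_residual a b m).1.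
Local Notation y a b m := (rescaled_residual a b m).2.

Definition residual_energy a b u v : R :=
  (2 - b) * u ^+ 2 + ((2 - b) - (2 - a - b) ^+ 2 * b) * v ^+ 2
  - 2 * (2 - a - b) * (1 - b) * u * v.

Lemma residual_energy_step a b u v :
  residual_energy a b ((2 - a - b) * u - (1 - b) * v) u =
  residual_energy a b u v - b * ((2 - b) ^+ 2 - (2 - a - b) ^+ 2) * v ^+ 2.
Proof. by rewrite /residual_energy; ring. Qed.

Lemma residual_energy_le a b m : 0 <= a -> 0 <= b -> a + b <= 2 ->
  residual_energy a b (x a b m) (y a b m) <= 2 - b.
Proof.
move=> a_ge0 b_ge0 ab_le2.
elim: m => [|m IH] /=; first by rewrite /residual_energy; lra.
rewrite residual_energy_step.
suff : 0 <= b * ((2 - b) ^+ 2 - (2 - a - b) ^+ 2) * y a b m ^+ 2 by lra.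
have -> : (2 - b) ^+ 2 - (2 - a - b) ^+ 2 = a * ((2 - b) + (2 - a - b)) by ring.
by rewrite mulr_ge0 ?sqr_ge0 // !mulr_ge0 //; lra.
Qed.

Lemma residual_energy_ge a b u v : 0 < a -> a <= 1 -> 0 <= b -> a + b <= 2 ->
  a * (2 - b) * u ^+ 2 <= 2 * residual_energy a b u v.
Proof.
move=> a_gt0 a_le1 b_ge0 ab_le2.
pose A := (2 - a) * (2 - b).
pose B := 2 * ((2 - b) - (2 - a - b) ^+ 2 * b).
pose C := 2 * (2 - a - b) * (1 - b).
have A_gt0 : 0 < A by rewrite mulr_gt0 //; lra.
(* [2 E - a (2 - b) u^2] is the quadratic form [A u^2 + B v^2 - 2 C u v], whose
   discriminant [A B - C^2] is a polynomial in [a], [b], [s = 2 - a - b] with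
   nonnegative coefficients. *)
have disc_ge0 : 0 <= A * B - C ^+ 2.
  set s := 2 - b - a.
  have s_ge0 : 0 <= s by rewrite /s; lra.
  have -> : A * B - C ^+ 2 = 2 * a * (a * b + s * (2 + b * (s * a + 1 + s ^+ 2))).
    by rewrite /A /B /C /s; ring.
  clearbody s; have a_ge0 := ltW a_gt0.
  by rewrite !(mulr_ge0, addr_ge0, sqr_ge0).
have Q_ge0 : 0 <= A * u ^+ 2 + B * v ^+ 2 - 2 * C * u * v.
  rewrite -(pmulr_rge0 _ A_gt0).
  have -> : A * (A * u ^+ 2 + B * v ^+ 2 - 2 * C * u * v) =
            (A * u - C * v) ^+ 2 + (A * B - C ^+ 2) * v ^+ 2 by ring.
  by rewrite addr_ge0 ?sqr_ge0 // mulr_ge0 ?sqr_ge0.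
suff -> : 2 * residual_energy a b u v =
          A * u ^+ 2 + B * v ^+ 2 - 2 * C * u * v + a * (2 - b) * u ^+ 2 by lra.
by rewrite /residual_energy /A /B /C; ring.
Qed.

Lemma rescaled_residual_sqr_le a b m : 0 <= a -> a <= 1 -> 0 <= b -> a + b <= 2 ->
  a * x a b m ^+ 2 <= 2.
Proof.
move=> a_ge0 a_le1 b_ge0 ab_le2.
have [->|a_neq0] := eqVneq a 0; first by rewrite mul0r; lra.
have a_gt0 : 0 < a by rewrite lt_neqAle eq_sym a_neq0.
rewrite -(ler_pM2r (_ : 0 < 2 - b)); last by lra.
have := residual_energy_ge a b (x a b m) (y a b m) a_gt0 a_le1 b_ge0 ab_le2.
have := residual_energy_le a b m a_ge0 b_ge0 ab_le2.
nra.
Qed.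

Lemma rescaled_residual_sqr_le1 a b m : 0 <= a -> 1 <= b -> a + b <= 2 ->
  x a b m ^+ 2 <= 1.
Proof.
move=> a_ge0 b_ge1 ab_le2.
set s := 2 - a - b; set t := b - 1.
have [s_ge0 t_ge0 st_le1] : [/\ 0 <= s, 0 <= t & s + t <= 1].
  by rewrite /s /t; split; lra.
suff inv m' : x a b m' ^+ 2 + t * y a b m' ^+ 2 <= 1.
  by have := inv m; have := sqr_ge0 (y a b m); nra.
elim: m' => [|m' IH] /=; first lra.
rewrite -/s (_ : 1 - b = - t) ?mulNr ?opprK; last by rewrite /t; ring.
have := sqr_convex_le s t (x a b m') (y a b m') s_ge0 t_ge0 st_le1.
have := sqr_ge0 (x a b m'); nra.
Qed.

Lemma rescaled_residual_invariant_le2b a b m : 0 <= a -> a <= 2 * b -> b <= 1 ->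
  (x a b m - (1 - b) * y a b m) ^+ 2 + a * (1 - b) * y a b m ^+ 2 <= 1.
Proof.
move=> a_ge0 a_le2b b_le1; set t := 1 - b.
have t_ge0 : 0 <= t by rewrite /t subr_ge0.
elim: m => [|m IH] /=; first by rewrite !(mulr0, expr0n) /= subr0 addr0 expr1n.
have -> : ((2 - a - b) * x a b m - t * y a b m - t * x a b m) ^+ 2
          + a * t * x a b m ^+ 2 =
          (x a b m - t * y a b m) ^+ 2 + a * t * y a b m ^+ 2
          - a * (t * (x a b m - y a b m) ^+ 2 + (2 * b - a) * x a b m ^+ 2).
  by rewrite /t; ring.
suff : 0 <= a * (t * (x a b m - y a b m) ^+ 2 + (2 * b - a) * x a b m ^+ 2) by lra.
by rewrite mulr_ge0 // addr_ge0 // mulr_ge0 ?sqr_ge0 ?subr_ge0.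
Qed.

Lemma rescaled_residual_growth_le2b a b m : 0 <= a -> a <= 2 * b -> b <= 1 ->
  `|x a b m| <= (m.+1)%:R /\ `|b * x a b m| <= 1.
Proof.
move=> a_ge0 a_le2b b_le1; set t := 1 - b.
have [t_ge0 b_ge0] : 0 <= t /\ 0 <= b by rewrite /t; split; lra.
elim: m => [|m [IHx IHbx]]; first by rewrite /= normr1 mulr1 ger0_norm.
set l := x a b m.+1 - t * x a b m.
have l_le1 : `|l| <= 1.
  have := rescaled_residual_invariant_le2b a b m.+1 a_ge0 a_le2b b_le1.
  rewrite -/t /= -/l => inv.
  rewrite -(expr_le1 (n := 2)) // -normrX ger0_norm ?sqr_ge0 //.
  have : 0 <= a * t * x a b m ^+ 2 by rewrite mulr_ge0 ?sqr_ge0 ?mulr_ge0.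
  lra.
have -> : x a b m.+1 = l + t * x a b m by rewrite /l; ring.
have t_le1 : t <= 1 by rewrite /t; lra.
split.
  rewrite (le_trans (ler_normD _ _)) // normrM (ger0_norm t_ge0) -natr1 addrC.
  by rewrite lerD // -[X in _ <= X]mul1r ler_pM.
rewrite mulrDr mulrCA (le_trans (ler_normD _ _)) //.
rewrite normrM (normrM t) (ger0_norm b_ge0) (ger0_norm t_ge0).
rewrite (_ : 1 = b + t); last by rewrite /t; ring.
by rewrite lerD // -[X in _ <= X]mulr1 ler_pM.
Qed.

Lemma rescaled_residual_sqr_le2b a b m : 0 <= a -> a <= 2 * b -> b <= 1 ->
  (a + b) * x a b m ^+ 2 <= 3 * (m.+1)%:R.
Proof.
move=> a_ge0 a_le2b b_le1.
have [x_le bx_le1] := rescaled_residual_growth_le2b a b m a_ge0 a_le2b b_le1.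
have bx2_le : b * x a b m ^+ 2 <= (m.+1)%:R.
  rewrite -(ger0_norm (_ : 0 <= b * x a b m ^+ 2)); last first.
    by rewrite mulr_ge0 ?sqr_ge0 //; lra.
  by rewrite expr2 mulrA normrM -[X in _ <= X]mul1r ler_pM.
have := sqr_ge0 (x a b m); nra.
Qed.

Lemma rescaled_residual_sqr_le_linear a b m : 0 <= a -> a <= 1 -> 0 <= b -> a + b <= 2 ->
  (a + b) * x a b m ^+ 2 <= 3 * (m.+1)%:R.
Proof.
move=> a_ge0 a_le1 b_ge0 ab_le2.
have m_ge1 : 1 <= (m.+1)%:R :> R by rewrite ler1n.
have x2_ge0 := sqr_ge0 (x a b m).
have [b_ge1|b_lt1] := leP 1 b.
  by have := rescaled_residual_sqr_le1 a b m a_ge0 b_ge1 ab_le2; nra.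
have [a_le2b|a_gt2b] := leP a (2 * b).
  exact: rescaled_residual_sqr_le2b a_ge0 a_le2b (ltW b_lt1).
by have := rescaled_residual_sqr_le a b m a_ge0 a_le1 b_ge0 ab_le2; nra.
Qed.

Lemma rescaled_residual_gap_le al be h m : 0 <= h -> 0 <= al -> 0 <= be ->
  al * h <= 1 -> (al + be) * h <= 2 ->
  let r := x (al * h) (be * h) m / (m.+1)%:R in
  (0 < al -> 2^-1 * h * r ^+ 2 <= (al * (m.+1)%:R ^+ 2)^-1) /\
  (0 < al + be -> 2^-1 * h * r ^+ 2 <= 4 * ((al + be) * (m.+1)%:R)^-1).
Proof.
move=> h_ge0 al_ge0 be_ge0 a_le1 ab_le2.
set a := al * h; set b := be * h; set N := (m.+1)%:R => r.
have [a_ge0 b_ge0] : 0 <= a /\ 0 <= b by split; apply: mulr_ge0.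
have ab_le2' : a + b <= 2 by rewrite /a /b -mulrDl.
have N_gt0 : 0 < N by rewrite ltr0n.
have N_neq0 : N != 0 by rewrite gt_eqF.
split => [al_gt0|ab_gt0].
  rewrite -[X in _ <= X]mulr1 ler_pdivlMl ?mulr_gt0 ?exprn_gt0 //.
  have -> : al * N ^+ 2 * (2^-1 * h * r ^+ 2) = 2^-1 * (a * x a b m ^+ 2).
    by rewrite /r /a /b; clearbody N; field.
  by have := rescaled_residual_sqr_le a b m a_ge0 a_le1 b_ge0 ab_le2'; lra.
rewrite [X in _ <= X]mulrC ler_pdivlMl ?mulr_gt0 //.
have -> : (al + be) * N * (2^-1 * h * r ^+ 2) = 2^-1 * ((a + b) * x a b m ^+ 2) / N.
  by rewrite /r /a /b; clearbody N; field.
rewrite ler_pdivrMr //.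
by have := rescaled_residual_sqr_le_linear a b m a_ge0 a_le1 b_ge0 ab_le2'; lra.
Qed.

End RescaledResidual.

Section QuadraticForm.
Context {R : rcfType} {d : nat}.
Implicit Types (H : 'M[R]_d) (q u v : 'cV[R]_d).

Lemma dotv_ge0 u : 0 <= dotv u u.
Proof. by rewrite /dotv mxE sumr_ge0 // => i _; rewrite mxE -expr2 sqr_ge0. Qed.

Lemma dotvBl u v w : dotv (u - v) w = dotv u w - dotv v w.
Proof. by rewrite /dotv linearB /= mulmxBl !mxE. Qed.

Lemma dotvBr u v w : dotv u (v - w) = dotv u v - dotv u w.
Proof. by rewrite /dotv mulmxBr !mxE. Qed.

Lemma dotv_sym_mx H u v : H^T = H -> dotv u (H *m v) = dotv v (H *m u).
Proof.
move=> HT; rewrite /dotv; have <- : (u^T *m (H *m v))^T = v^T *m (H *m u).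
  by rewrite !trmx_mul trmxK HT mulmxA.
by rewrite [RHS]mxE.
Qed.

Lemma posdef_unitmx H : sym_posdef H -> H \in unitmx.
Proof.
move=> [HT Hpos]; rewrite unitmxE unitfE; apply/negP => /det0P[v v_neq0 vH].
have HvT : H *m v^T = 0 by rewrite -{1}HT -trmx_mul vH trmx0.
by have := Hpos v^T; rewrite trmx_eq0 v_neq0 HvT /dotv mulmx0 mxE ltxx => /(_ isT).
Qed.

Lemma posdef_eigenvalue_gt0 H a : sym_posdef H -> eigenvalue H a -> 0 < a.
Proof.
move=> [HT Hpos] /eigenvalueP[v vH v_neq0].
have Hv : H *m v^T = a *: v^T by rewrite -{1}HT -trmx_mul vH linearZ.
have := Hpos v^T; rewrite trmx_eq0 v_neq0 Hv /dotv -scalemxAr mxE -/(dotv v^T v^T).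
move=> /(_ isT); have := dotv_ge0 v^T; rewrite le_eqVlt => /orP[/eqP <-|vv_gt0].
  by rewrite mulr0 ltxx.
by rewrite pmulr_lgt0.
Qed.

Lemma quadf_gap H q u : sym_posdef H ->
  quadf H q u - quadf H q (thstar H q) =
  2^-1 * dotv (u - thstar H q) (H *m (u - thstar H q)).
Proof.
move=> hH; have [HT _] := hH; set ts := thstar H q.
have Hts : H *m ts = q by rewrite /ts /thstar mulmxA mulmxV ?posdef_unitmx ?mul1mx.
have dotq w : dotv q w = dotv w (H *m ts).
  by rewrite dotv_sym_mx // -Hts /dotv trmx_mul HT -mulmxA.
rewrite /quadf !dotq mulmxBr dotvBl !dotvBr (dotv_sym_mx H ts u HT).
by field.
Qed.

End QuadraticForm.

Local Open Scope sesquilinear_scope.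

Section Eigencoordinates.
Context {R : rcfType} {d : nat}.
Local Notation C := R[i].
Local Notation realC := (real_complex R).
Implicit Types (H : 'M[R]_d) (u v : 'cV[R]_d).

Lemma conjC_realC (r : R) : (realC r)^* = realC r.
Proof. by apply/CrealP; rewrite complex_real. Qed.

Lemma sym_hermsymmx H : H^T = H -> map_mx realC H \is hermsymmx.
Proof.
move=> HT; apply/is_hermitianmxP; rewrite expr0 scale1r.
by apply/matrixP => i j; rewrite !mxE conjC_realC -{1}HT mxE.
Qed.

(* A real symmetric matrix is diagonalised through its complexification, to
   which the spectral theorem for normal complex matrices applies. *)
Definition eigbasis H : 'M[C]_d := spectralmx (map_mx realC H).
Definition eigval H (i : 'I_d) : R := complex.Re (spectral_diag (map_mx realC H) 0 i).
Definition eigcoords H u : 'cV[C]_d := eigbasis H *m map_mx realC u.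

Lemma eigbasis_unitary H : (eigbasis H)^t* *m eigbasis H = 1%:M.
Proof. by rewrite -invmx_unitary ?spectral_unitarymx // mulVmx ?spectral_unit. Qed.

Lemma spectral_diag_realC H : H^T = H ->
  spectral_diag (map_mx realC H) = \row_i realC (eigval H i).
Proof.
move=> HT; apply/rowP => i; rewrite mxE /eigval.
by have /mxOverP/(_ 0 i)/complex_realP[r ->] :=
  hermitian_spectral_diag_real (sym_hermsymmx H HT).
Qed.

Lemma eigbasis_diag H : H^T = H ->
  eigbasis H *m map_mx realC H = diag_mx (\row_i realC (eigval H i)) *m eigbasis H.
Proof.
move=> HT; have /orthomx_spectralP E := hermitian_normalmx (sym_hermsymmx H HT).
by rewrite -spectral_diag_realC // /eigbasis {2}E !mulmxA mulmxV ?spectral_unit ?mul1mx.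
Qed.

Lemma eigenvalue_eigval H i : H^T = H -> eigenvalue H (eigval H i).
Proof.
move=> HT; rewrite -(eigenvalue_map realC); apply/eigenvalueP.
exists (row i (eigbasis H)).
  by rewrite -row_mul eigbasis_diag // mul_diag_mx; apply/rowP => j; rewrite !mxE.
apply/eqP => row0.
have : row i (eigbasis H *m (eigbasis H)^t*) = 0 by rewrite row_mul row0 mul0mx.
have /unitarymxP -> := spectral_unitarymx (map_mx realC H).
by move=> /rowP/(_ i)/eqP; rewrite !mxE eqxx oner_eq0.
Qed.

Lemma realC_dotv H u v :
  realC (dotv u v) = \sum_i ((eigcoords H u) i 0)^* * (eigcoords H v) i 0.
Proof.
have trC : (map_mx realC u)^T = (map_mx realC u)^t*.
  by apply/matrixP => i j; rewrite !mxE conjC_realC.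
have -> : realC (dotv u v) = map_mx realC (u^T *m v) 0 0 by rewrite [RHS]mxE.
rewrite map_mxM -map_trmx trC.
have -> : (map_mx realC u)^t* *m map_mx realC v = (eigcoords H u)^t* *m eigcoords H v.
  rewrite /eigcoords trmx_mul map_mxM mulmxA -(mulmxA _ _ (eigbasis H)).
  by rewrite eigbasis_unitary mulmx1.
by rewrite mxE; apply: eq_bigr => i _; rewrite !mxE.
Qed.

Lemma eigcoordsB H u v i :
  eigcoords H (u - v) i 0 = eigcoords H u i 0 - eigcoords H v i 0.
Proof. by rewrite /eigcoords map_mxB mulmxBr !mxE. Qed.

Lemma eigcoordsZ H (c : R) u i : eigcoords H (c *: u) i 0 = realC c * eigcoords H u i 0.
Proof. by rewrite /eigcoords map_mxZ -scalemxAr !mxE. Qed.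

Lemma eigcoords_mul H u : H^T = H -> forall i,
  eigcoords H (H *m u) i 0 = realC (eigval H i) * eigcoords H u i 0.
Proof.
by move=> HT i; rewrite /eigcoords map_mxM mulmxA eigbasis_diag // -mulmxA mul_diag_mx !mxE.
Qed.

End Eigencoordinates.

Section Iterates.
Context {R : rcfType} {d : nat} (H : 'M[R]_d) (q : 'cV[R]_d) (al be : R).
Local Notation realC := (real_complex R).
Local Notation ts := (thstar H q).

Lemma av_step_sub_thstar m (u v : 'cV[R]_d) :
  let N := (m.+1)%:R : R in let N1 := m%:R : R in
  av_step H q al be m.+1 u v - ts =
  (2 * N / (N + 1)) *: (u - ts) - (N1 / (N + 1)) *: (v - ts)
  - (N + 1)^-1 *: (N * (al + be) *: (H *m (u - ts)) - N1 * be *: (H *m (v - ts))).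
Proof.
move=> N N1; rewrite /av_step /=.
move: ((N + 1)^-1 *: _) => K; apply/matrixP => i j; rewrite !mxE.
have N1_neq0 : N + 1 != 0 by rewrite /N natr1 pnatr_eq0.
by rewrite /N /N1 -!natr1 in N1_neq0 *; field.
Qed.

Hypothesis HT : H^T = H.

Lemma eigcoords_av_pair th0 i m :
  let h := eigval H i in let c th := eigcoords H (th - ts) i 0 in
  (m.+1)%:R * c (av_pair H q al be th0 m).1 =
    realC (rescaled_residual (al * h) (be * h) m).1 * c th0 /\
  m%:R * c (av_pair H q al be th0 m).2 =
    realC (rescaled_residual (al * h) (be * h) m).2 * c th0.
Proof.
move=> h c; elim: m => [|m [IH1 IH2]]; first by split; rewrite /= ?rmorph1 ?mul1r ?mul0r.
split; last by rewrite /= IH1.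
rewrite [(av_pair _ _ _ _ _ _).1]/= /c av_step_sub_thstar.
rewrite !(eigcoordsB, eigcoordsZ, eigcoords_mul) // -!eigcoordsB -!/(c _).
(* After multiplication by [m + 2], only the products [(m + 1) c_(m+1)] and
   [m c_m] of the induction hypotheses remain. *)
move: IH1 IH2; rewrite /=.
set x := (rescaled_residual _ _ m).1; set y := (rescaled_residual _ _ m).2 => IH1 IH2.
have -> : realC ((2 - al * h - be * h) * x - (1 - be * h) * y) * c th0 =
    realC (2 - al * h - be * h) * (realC x * c th0) - realC (1 - be * h) * (realC y * c th0).
  by rewrite !(rmorphB, rmorphM); ring.
rewrite -IH1 -IH2 !(rmorphB, rmorphM, rmorphD, fmorphV, rmorph_nat, rmorph1) /h.
have m2_neq0 : m%:R + 1 + 1 != 0 :> R[i] by rewrite !natr1 pnatr_eq0.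
by rewrite -!natr1; field.
Qed.

Lemma quadf_av_theta_gap_le th0 m (c : R) : sym_posdef H ->
  (forall i, let h := eigval H i in
     2^-1 * h * ((rescaled_residual (al * h) (be * h) m).1 / (m.+1)%:R) ^+ 2 <= c) ->
  quadf H q (av_theta H q al be th0 m.+1) - quadf H q ts <=
  c * dotv (th0 - ts) (th0 - ts).
Proof.
move=> hH coeff_le; rewrite quadf_gap // -lecR !rmorphM /= !(realC_dotv H) !mulr_sumr.
apply: ler_sum => i _; rewrite eigcoords_mul //.
have [coord_eq _] := eigcoords_av_pair th0 i m.
move: coord_eq (coeff_le i); rewrite /av_theta /=.
set h := eigval H i; set x := (rescaled_residual _ _ m).1.
set e := eigcoords H _ i 0; set w := eigcoords H _ i 0 => coord_eq coeff_le_i.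
have N_neq0 : (m.+1)%:R != 0 :> R[i] by rewrite pnatr_eq0.
have -> : e = realC (x / (m.+1)%:R) * w.
  by rewrite rmorphM fmorphV rmorph_nat mulrAC -coord_eq mulrAC mulfV ?mul1r.
have -> : realC 2^-1 *
      ((realC (x / (m.+1)%:R) * w)^* * (realC h * (realC (x / (m.+1)%:R) * w))) =
    realC (2^-1 * h * (x / (m.+1)%:R) ^+ 2) * (w^* * w).
  by rewrite [(_ * w)^*]rmorphM /= conjC_realC !rmorphM /=; ring.
by rewrite ler_wpM2r ?lecR // mulrC mul_conjC_ge0.
Qed.

End Iterates.

Theorem corollary1 (R : rcfType) (d : nat) (H : 'M[R]_d) (q : 'cV[R]_d) (L : R)
  (alpha beta : R) (th0 : 'cV[R]_d)
  (hH : sym_posdef H) (hL : largest_eigenvalue H L)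
  (ha0 : 0 <= alpha) (ha1 : alpha <= L^-1)
  (hb0 : 0 <= beta) (hb1 : beta <= 2 / L - alpha) :
  forall n : nat, (1 <= n)%N ->
    let gap := quadf H q (av_theta H q alpha beta th0 n) - quadf H q (thstar H q) in
    let D := dotv (th0 - thstar H q) (th0 - thstar H q) in
    (0 < alpha -> gap <= D / (alpha * (n%:R) ^+ 2)) /\
    (0 < alpha + beta -> gap <= 4 * D / ((alpha + beta) * n%:R)).
Proof.
case=> [//|m] _ gap D; have [HT _] := hH.
have L_gt0 : 0 < L := posdef_eigenvalue_gt0 H L hH hL.1.
have scaled_steps i : let h := eigval H i in
    [/\ 0 <= h, alpha * h <= 1 & (alpha + beta) * h <= 2].
  have ev := eigenvalue_eigval H i HT.
  have h_ge0 := ltW (posdef_eigenvalue_gt0 H _ hH ev); have h_le := hL.2 _ ev.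
  split => //; apply: (mulr_le_of_le_div _ _ L _ L_gt0) => //.
  - by rewrite div1r.
  - by rewrite addr_ge0.
  - by rewrite -lerBrDl.
split=> pos.
  rewrite mulrC; apply: quadf_av_theta_gap_le => // i.
  have [h_ge0 a_le1 ab_le2] := scaled_steps i.
  exact: (rescaled_residual_gap_le _ _ _ m h_ge0 ha0 hb0 a_le1 ab_le2).1 pos.
rewrite mulrAC; apply: quadf_av_theta_gap_le => // i.
have [h_ge0 a_le1 ab_le2] := scaled_steps i.
exact: (rescaled_residual_gap_le _ _ _ m h_ge0 ha0 hb0 a_le1 ab_le2).2 pos.
Qed.
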